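(* Consider the mixed CAC game (defined in the context) with $\mathcal V_c\neq\emptyset$ and $\mathcal V_a\neq\emptyset$. (1) If $x^*\in\mathcal X$ is a Nash equilibrium, then, writing $z^*=z(x^* )$, $z_c^*=z_c(x^* )$, $z_a^*=z_a(x^* )$, the following hold for every $\epsilon_c\in(0,\tfrac1n]$ and every $\epsilon_a\in(\tfrac1n,\tfrac2n]$: $$ \begin{cases} z_c^*=F_c\!\left(\frac{n}{n-1}(z^*-\epsilon_c)\right),\\[2pt] G_a\!\left(\frac{n}{n-1}(z^*-\epsilon_a)\right)\ \ge\ z_a^*\ \ge\ G_a\!\left(\frac{n}{n-1}z^*\right),\\[2pt] z^*=\alpha z_c^*+(1-\alpha)z_a^*. \end{cases} $$ (2) Conversely, if $z^*\in\{0,\tfrac1n,\dots,1\}$, $z_c^*\in\{0,\tfrac1{n_c},\dots,1\}$ and $z_a^*\in\{0,\tfrac1{n_a},\dots,1\}$ satisfy the three conditions above for every $\epsilon_c\in(0,\tfrac1n]$ and every $\epsilon_a\in(\tfrac1n,\tfrac2n]$, then there exists a Nash equilibrium $x^*\in\mathcal X$ with $z(x^* )=z^*$, $z_c(x^* )=z_c^*$ and $z_a(x^* )=z_a^*$.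
   Context: Let $\mathcal V$ be a finite set of $n\ge 2$ agents, partitioned into disjoint sets $\mathcal V_c$ (coordinating agents) and $\mathcal V_a$ (anti-coordinating agents), $\mathcal V=\mathcal V_c\cup\mathcal V_a$. Set $\delta_i=+1$ if $i\in\mathcal V_c$ and $\delta_i=-1$ if $i\in\mathcal V_a$. Given real weights $d_i$ ($i\in\mathcal V$), the mixed coordination/anti-coordination (CAC) game has action set $\{-1,+1\}$ for every agent, configuration space $\mathcal X=\{-1,+1\}^{\mathcal V}$, and utilities $u_i(x)=\delta_i\big(\sum_{j\neq i}x_ix_j-d_ix_i\big)$. A (pure) Nash equilibrium is an $x\in\mathcal X$ such that $u_i(x)\ge u_i(y_i,x_{-i})$ for every $i\in\mathcal V$ and $y_i\in\{-1,+1\}$. The threshold of agent $i$ is $r_i=\tfrac12+\tfrac{d_i}{2(n-1)}$. Let $n_c=|\mathcal V_c|$, $n_a=|\mathcal V_a|$, $\alpha=n_c/n$. For $x\in\mathcal X$ let $z(x)=\frac1n|\{i\in\mathcal V: x_i=+1\}|$, $z_c(x)=\frac1{n_c}|\{i\in\mathcal V_c: x_i=+1\}|$, $z_a(x)=\frac1{n_a}|\{i\in\mathcal V_a: x_i=+1\}|$. Define $F_c(t)=\frac1{n_c}|\{i\in\mathcal V_c: r_i\le t\}|$ (threshold CDF of coordinating agents) and $G_a(t)=\frac1{n_a}|\{i\in\mathcal V_a: r_i> t\}|$ (threshold complementary CDF of anti-coordinating agents), for $t\in\mathbb R$. *)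

From HB Require Import structures.
From mathcomp Require Import all_boot all_order all_algebra.
Set Implicit Arguments. Unset Strict Implicit. Unset Printing Implicit Defensive.
Import Order.TTheory GRing.Theory Num.Theory.
Local Open Scope ring_scope.

Section CAC.
Variables (R : realFieldType) (n : nat).

Definition Va (Vc : {set 'I_n}) : {set 'I_n} := ~: Vc.

Definition act (b : bool) : R := if b then 1 else -1.

Definition delta (Vc : {set 'I_n}) (i : 'I_n) : R := if i \in Vc then 1 else -1.

Definition utility (Vc : {set 'I_n}) (d : 'I_n -> R) (i : 'I_n)
    (x : 'I_n -> bool) : R :=
  delta Vc i * (\sum_(j < n | j != i) act (x i) * act (x j) - d i * act (x i)).

Definition upd (x : 'I_n -> bool) (i : 'I_n) (b : bool) : 'I_n -> bool :=
  fun j => if j == i then b else x j.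

Definition nash (Vc : {set 'I_n}) (d : 'I_n -> R) (x : 'I_n -> bool) : Prop :=
  forall (i : 'I_n) (b : bool), utility Vc d i (upd x i b) <= utility Vc d i x.

Definition thr (d : 'I_n -> R) (i : 'I_n) : R :=
  1 / 2 + d i / (2 * (n%:R - 1)).

Definition zz (x : 'I_n -> bool) : R := #|[set i | x i]|%:R / n%:R.
Definition zc (Vc : {set 'I_n}) (x : 'I_n -> bool) : R :=
  #|[set i in Vc | x i]|%:R / #|Vc|%:R.
Definition za (Vc : {set 'I_n}) (x : 'I_n -> bool) : R :=
  #|[set i in Va Vc | x i]|%:R / #|Va Vc|%:R.

Definition alpha (Vc : {set 'I_n}) : R := #|Vc|%:R / n%:R.

Definition Fc (Vc : {set 'I_n}) (d : 'I_n -> R) (t : R) : R :=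
  #|[set i in Vc | thr d i <= t]|%:R / #|Vc|%:R.
Definition Ga (Vc : {set 'I_n}) (d : 'I_n -> R) (t : R) : R :=
  #|[set i in Va Vc | t < thr d i]|%:R / #|Va Vc|%:R.

Definition cac_cond (Vc : {set 'I_n}) (d : 'I_n -> R) (z zc' za' : R) : Prop :=
  [/\ (forall ec : R, 0 < ec -> ec <= 1 / n%:R ->
         zc' = Fc Vc d (n%:R / (n%:R - 1) * (z - ec))),
      (forall ea : R, 1 / n%:R < ea -> ea <= 2 / n%:R ->
         Ga Vc d (n%:R / (n%:R - 1) * (z - ea)) >= za' /\
         za' >= Ga Vc d (n%:R / (n%:R - 1) * z))
    & z = alpha Vc * zc' + (1 - alpha Vc) * za'].

Definition grid (m : nat) (v : R) : Prop :=
  exists2 k : nat, (k <= m)%N & v = k%:R / m%:R.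

End CAC.

From HB Require Import structures.
From mathcomp Require Import all_boot all_order all_algebra.
From mathcomp Require Import ring lra zify.
Set Implicit Arguments. Unset Strict Implicit. Unset Printing Implicit Defensive.
Import Order.TTheory GRing.Theory Num.Theory.
Local Open Scope ring_scope.

(* Whether a profile is an equilibrium depends on each agent only through its
   own action and the number K of agents playing +1: a coordinator may play +1
   iff its threshold is at most (K - 1)/(n - 1) and -1 iff it is at least
   K/(n - 1), and an anti-coordinator the other way round.  Writing
   eps = (K - s)/n, the point n/(n - 1) (z - eps) becomes s/(n - 1), with s
   ranging over [K - 1, K) for eps_c and over [K - 2, K - 1) for eps_a; in these
   terms part (1) is immediate.  For part (2), coordinators play +1 exactly
   below (K - 1)/(n - 1): since F_c is constant on [(K - 1)/(n - 1), K/(n - 1)),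
   no coordinator threshold lies in that gap.  The anti-coordinators playing +1
   are chosen between those forced to do so and those allowed to, and the two
   G_a inequalities say that the prescribed number fits in between. *)

Lemma card_set_between (T : finType) (A B : {set T}) (m : nat) :
  A \subset B -> (#|A| <= m <= #|B|)%N ->
  exists C : {set T}, [/\ A \subset C, C \subset B & #|C| = m].
Proof.
move=> AB /andP[Am mB].
have /card_geqP[s [s_uniq s_size sBA]] : (m - #|A| <= #|B :\: A|)%N.
  by rewrite cardsDS //; lia.
have S_BA : [set y in s] \subset B :\: A by apply/subsetP => y; rewrite inE => /sBA.
exists (A :|: [set y in s]); split; first exact: subsetUl.
  by rewrite subUset AB (subset_trans S_BA) ?subsetDl.
have AS0 : A :&: [set y in s] = set0.
  apply/setP => y; rewrite !inE; apply/negbTE/andP => -[yA /sBA].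
  by rewrite !inE yA.
rewrite cardsU AS0 cards0 subn0 cardsE (card_uniqP s_uniq) s_size; lia.
Qed.

Lemma exists_gap_below (T : finType) (R : realDomainType) (f : T -> R) (l a : R) :
  l < a -> exists t, [/\ l <= t, t < a & forall j, (t < f j) = (a <= f j)].
Proof.
move=> la; exists (\big[Num.max/l]_(j | f j < a) f j); split.
- exact: bigmax_ge_id.
- by apply/bigmax_ltP.
- move=> j; case: (ltP (f j) a) => [fja | afj].
    by apply/negbTE; rewrite -leNgt; apply: le_bigmax_cond.
  by apply: lt_le_trans afj; apply/bigmax_ltP.
Qed.

Lemma ratio_inj (R : numFieldType) (a b m : nat) :
  (0 < m)%N -> a%:R / m%:R = b%:R / m%:R :> R -> a = b.
Proof.
move=> m_gt0 /(mulIf (invr_neq0 _)); rewrite pnatr_eq0 -lt0n m_gt0.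
by move=> /(_ isT)/eqP; rewrite eqr_nat => /eqP.
Qed.

Lemma ratio_le (R : numFieldType) (a b m : nat) :
  (0 < m)%N -> (a%:R / m%:R <= b%:R / m%:R :> R) = (a <= b)%N.
Proof. by move=> m_gt0; rewrite ler_pM2r ?ler_nat // invr_gt0 ltr0n. Qed.

Section CACGame.
Variables (R : realFieldType) (n : nat) (Vc : {set 'I_n}) (d : 'I_n -> R).

Local Notation nplus x := #|[set j | x j]|.

Lemma act_nat (b : bool) : act R b = 2 * (b : nat)%:R - 1.
Proof. by case: b => /=; rewrite ?mulr1 ?mulr0; lra. Qed.

Lemma sum_act (x : 'I_n -> bool) : \sum_(j < n) act R (x j) = 2 * (nplus x)%:R - n%:R.
Proof.
under eq_bigr do rewrite act_nat.
rewrite big_split /= sumrN -mulr_sumr -natr_sum sumr_const card_ord.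
congr (2 * _%:R - _); rewrite cardsE -sum1_card [RHS]big_mkcond /=.
by apply: eq_bigr => j _; rewrite unfold_in; case: (x j).
Qed.

Lemma utility_unilateral (x y : 'I_n -> bool) (i : 'I_n) :
  (forall j, j != i -> y j = x j) ->
  utility Vc d i y =
    delta R Vc i * act R (y i) * (2 * (nplus x)%:R - n%:R - act R (x i) - d i).
Proof.
move=> yx; rewrite /utility -mulrA; congr (_ * _).
rewrite -mulr_sumr [d i * _]mulrC -mulrBr; congr (_ * (_ - _)).
rewrite -sum_act [in RHS](bigD1 i) //= addrAC subrr add0r.
by apply: eq_bigr => j /yx ->.
Qed.

(* [K] counts the agents playing +1, agent [i] included. *)
Definition best_response (K : R) (i : 'I_n) (b : bool) : Prop :=
  if i \in Vc then
    if b then thr d i <= (K - 1) / (n%:R - 1) else K / (n%:R - 1) <= thr d i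
  else
    if b then (K - 1) / (n%:R - 1) <= thr d i else thr d i <= K / (n%:R - 1).

Hypothesis n_ge2 : (2 <= n)%N.

Lemma n_gt0 : 0 < n%:R :> R.
Proof. by rewrite ltr0n; case: n n_ge2. Qed.

Lemma n1_gt0 : 0 < n%:R - 1 :> R.
Proof. by rewrite subr_gt0 -[1]/(1%:R) ltr_nat. Qed.

Lemma thr_scaled (i : 'I_n) : thr d i * (n%:R - 1) = (n%:R - 1 + d i) / 2.
Proof. by rewrite /thr; field; rewrite gt_eqF ?n1_gt0. Qed.

Lemma thr_le_level (i : 'I_n) (a : R) :
  (thr d i <= a / (n%:R - 1)) = (n%:R - 1 + d i <= 2 * a).
Proof. by rewrite ler_pdivlMr ?n1_gt0 // thr_scaled ler_pdivrMr // mulrC. Qed.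

Lemma level_le_thr (i : 'I_n) (a : R) :
  (a / (n%:R - 1) <= thr d i) = (2 * a <= n%:R - 1 + d i).
Proof. by rewrite ler_pdivrMr ?n1_gt0 // thr_scaled ler_pdivlMr // mulrC. Qed.

Lemma nash_iff_best_response (x : 'I_n -> bool) :
  nash Vc d x <-> forall i, best_response (nplus x)%:R i (x i).
Proof.
have utility_dev i b : utility Vc d i (upd x i b) =
    delta R Vc i * act R b * (2 * (nplus x)%:R - n%:R - act R (x i) - d i).
  by rewrite (@utility_unilateral x) /upd ?eqxx // => j /negbTE ->.
have utility_eq i := @utility_unilateral x x i (fun _ _ => erefl).
split=> [Nx i | BRx i b].
- move: (Nx i (~~ x i)); rewrite utility_dev utility_eq /best_response /delta.
  by case: (i \in Vc); case: (x i); rewrite /= ?thr_le_level ?level_le_thr; lra.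
- move: (BRx i); rewrite utility_dev utility_eq /best_response /delta.
  by case: (i \in Vc); case: (x i); case: b; rewrite /= ?thr_le_level ?level_le_thr; lra.
Qed.

Lemma ler_level (a b : R) : (a / (n%:R - 1) <= b / (n%:R - 1)) = (a <= b).
Proof. by rewrite ler_pM2r // invr_gt0 n1_gt0. Qed.

Lemma ltr_level (a b : R) : (a / (n%:R - 1) < b / (n%:R - 1)) = (a < b).
Proof. by rewrite ltr_pM2r // invr_gt0 n1_gt0. Qed.

(* [cac_cond] at [z = K / n] after the substitution [s = K - n * eps]. *)
Definition level_cond (K zc' za' : R) : Prop :=
  [/\ forall s, K - 1 <= s -> s < K -> zc' = Fc Vc d (s / (n%:R - 1)),
      forall s, K - 2 <= s -> s < K - 1 ->
        Ga Vc d (s / (n%:R - 1)) >= za' /\ za' >= Ga Vc d (K / (n%:R - 1))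
    & K / n%:R = alpha R Vc * zc' + (1 - alpha R Vc) * za'].

Lemma forall_eps_level (P : R -> Prop) (K lo hi : R) :
  (forall e, lo / n%:R < e -> e <= hi / n%:R ->
     P (n%:R / (n%:R - 1) * (K / n%:R - e))) <->
  (forall s, K - hi <= s -> s < K - lo -> P (s / (n%:R - 1))).
Proof.
have n0 := n_gt0; have n10 := n1_gt0.
split=> HP.
- move=> s s_ge s_lt; have := HP ((K - s) / n%:R).
  have -> : n%:R / (n%:R - 1) * (K / n%:R - (K - s) / n%:R) = s / (n%:R - 1).
    by field; rewrite !gt_eqF.
  by apply; rewrite ?ltr_pM2r ?ler_pM2r ?invr_gt0 //; lra.
- move=> e e_gt e_le.
  have -> : n%:R / (n%:R - 1) * (K / n%:R - e) = (K - n%:R * e) / (n%:R - 1).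
    by field; rewrite !gt_eqF.
  move: e_gt e_le; rewrite ltr_pdivrMr // ler_pdivlMr // ![e * _]mulrC => e_gt e_le.
  by apply: HP; lra.
Qed.

Lemma cac_cond_levelP (K zc' za' : R) :
  cac_cond Vc d (K / n%:R) zc' za' <-> level_cond K zc' za'.
Proof.
have scale : n%:R / (n%:R - 1) * (K / n%:R) = K / (n%:R - 1).
  by field; rewrite !gt_eqF ?n_gt0 ?n1_gt0.
have shift_c := forall_eps_level (fun t : R => zc' = Fc Vc d t) K 0 1.
have shift_a := forall_eps_level
  (fun t : R => Ga Vc d t >= za' /\ za' >= Ga Vc d (K / (n%:R - 1))) K 1 2.
rewrite mul0r subr0 in shift_c.
rewrite /cac_cond scale; split=> -[Hc Ha Hz].
- by split=> //; [apply/shift_c | apply/shift_a].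
- by split=> //; [apply/shift_c | apply/shift_a].
Qed.

Lemma card_Vc_Va : (#|Vc| + #|Va Vc|)%N = n.
Proof. by rewrite /Va cardsC card_ord. Qed.

Lemma card_plus_split (x : 'I_n -> bool) :
  nplus x = (#|[set i in Vc | x i]| + #|[set i in Va Vc | x i]|)%N.
Proof.
rewrite -(cardsID Vc [set j | x j]).
by congr (_ + _)%N; apply: eq_card => i; rewrite !inE andbC.
Qed.

Lemma zz_mix (x : 'I_n -> bool) : Vc != set0 -> Va Vc != set0 ->
  zz R x = alpha R Vc * zc R Vc x + (1 - alpha R Vc) * za R Vc x.
Proof.
rewrite -!card_gt0 -!(ltr0n R) => c_gt0 a_gt0.
have nE : n%:R = #|Vc|%:R + #|Va Vc|%:R :> R by rewrite -natrD card_Vc_Va.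
rewrite /zz /zc /za /alpha card_plus_split natrD nE.
by field; rewrite !gt_eqF ?addr_gt0.
Qed.

Section Equilibrium.
Variable x : 'I_n -> bool.
Hypothesis x_nash : nash Vc d x.
Let K : R := (nplus x)%:R.

Lemma nash_coord_set (s : R) : K - 1 <= s -> s < K ->
  [set i in Vc | thr d i <= s / (n%:R - 1)] = [set i in Vc | x i].
Proof.
move: x_nash => /nash_iff_best_response BR s_ge s_lt; apply/setP => i.
rewrite !inE; case: (boolP (i \in Vc)) => //= iVc.
move: (BR i); rewrite /best_response iVc; case: (x i) => thr_i.
- by apply: (le_trans thr_i); rewrite ler_level.
- by apply/negbTE; rewrite -ltNge; apply: lt_le_trans thr_i; rewrite ltr_level.
Qed.

Lemma nash_anti_subset (s : R) : s < K - 1 ->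
  [set i in Va Vc | x i] \subset [set i in Va Vc | s / (n%:R - 1) < thr d i].
Proof.
move: x_nash => /nash_iff_best_response BR s_lt; apply/subsetP => i.
rewrite !inE => /andP[iVa xi]; rewrite iVa /=.
move: (BR i); rewrite /best_response (negbTE iVa) xi.
by apply: lt_le_trans; rewrite ltr_level.
Qed.

Lemma nash_anti_supset :
  [set i in Va Vc | K / (n%:R - 1) < thr d i] \subset [set i in Va Vc | x i].
Proof.
move: x_nash => /nash_iff_best_response BR; apply/subsetP => i.
rewrite !inE => /andP[iVa thr_i]; rewrite iVa /=.
move: (BR i); rewrite /best_response (negbTE iVa).
by case: (x i) => // /(lt_le_trans thr_i); rewrite ltxx.
Qed.

Lemma nash_level_cond : Vc != set0 -> Va Vc != set0 ->
  level_cond K (zc R Vc x) (za R Vc x).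
Proof.
move=> Vc_ne0 Va_ne0; split.
- by move=> s s_ge s_lt; rewrite /Fc nash_coord_set.
- move=> s _ s_lt; split; rewrite /za /Ga ler_wpM2r ?invr_ge0 ?ler0n // ler_nat.
    exact/subset_leq_card/nash_anti_subset.
  exact/subset_leq_card/nash_anti_supset.
- exact: zz_mix.
Qed.

End Equilibrium.

Section Construction.
Variables (k kc ka : nat).
Hypotheses (Vc_ne0 : Vc != set0) (Va_ne0 : Va Vc != set0).
Hypothesis k_level :
  level_cond k%:R (kc%:R / #|Vc|%:R) (ka%:R / #|Va Vc|%:R).

Lemma level_coord_card (s : R) : k%:R - 1 <= s -> s < k%:R ->
  #|[set i in Vc | thr d i <= s / (n%:R - 1)]| = kc.
Proof.
case: k_level => Hc _ _ s_ge s_lt.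
by apply/(ratio_inj (R := R) (m := #|Vc|)); rewrite ?card_gt0 // (Hc s).
Qed.

Lemma coord_thr_gap (i : 'I_n) : i \in Vc ->
  (k%:R - 1) / (n%:R - 1) < thr d i -> k%:R / (n%:R - 1) <= thr d i.
Proof.
move=> iVc lo_lt; rewrite leNgt; apply/negP => lt_hi.
pose s := thr d i * (n%:R - 1).
have sE : s / (n%:R - 1) = thr d i by rewrite mulfK ?gt_eqF ?n1_gt0.
have s_gt : k%:R - 1 < s by rewrite -ltr_level sE.
have s_lt : s < k%:R by rewrite -ltr_level sE.
have : [set j in Vc | thr d j <= (k%:R - 1) / (n%:R - 1)] \proper
       [set j in Vc | thr d j <= s / (n%:R - 1)].
  rewrite sE; apply/properP; split.
    by apply/subsetP => j; rewrite !inE => /andP[-> /le_trans]; apply; apply: ltW.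
  by exists i; rewrite !inE iVc ?lexx // -ltNge.
move/proper_card; rewrite !level_coord_card ?ltnn ?lexx ?ltW //.
by rewrite ltrBlDr ltrDl.
Qed.

Lemma level_anti_card_le :
  (#|[set i in Va Vc | (k%:R / (n%:R - 1) < thr d i)%R]| <= ka)%N.
Proof.
case: k_level => _ Ha _.
have [|_] := Ha (k%:R - 2) (lexx _); first by lra.
by rewrite /Ga ratio_le // card_gt0.
Qed.

Lemma level_anti_card_ge :
  (ka <= #|[set i in Va Vc | ((k%:R - 1) / (n%:R - 1) <= thr d i)%R]|)%N.
Proof.
case: k_level => _ Ha _.
have [|t [t_ge t_lt gap]] := exists_gap_below (thr d)
  (l := (k%:R - 2) / (n%:R - 1)) (a := (k%:R - 1) / (n%:R - 1)).
  by rewrite ltr_level; lra.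
pose s := t * (n%:R - 1).
have sE : s / (n%:R - 1) = t by rewrite mulfK ?gt_eqF ?n1_gt0.
have [] := Ha s; rewrite -?(ler_level _ s) -?(ltr_level s) ?sE //.
rewrite /Ga ratio_le ?card_gt0 // => + _.
by congr (_ <= _)%N; apply: eq_card => i; rewrite !inE gap.
Qed.

Lemma level_card_sum : k = (kc + ka)%N.
Proof.
case: k_level => _ _ Hz.
have c_gt0 : 0 < #|Vc|%:R :> R by rewrite ltr0n card_gt0.
have a_gt0 : 0 < #|Va Vc|%:R :> R by rewrite ltr0n card_gt0.
have nE : n%:R = #|Vc|%:R + #|Va Vc|%:R :> R by rewrite -natrD card_Vc_Va.
apply: (ratio_inj (R := R) (m := n)); first by case: n n_ge2.
by rewrite Hz /alpha natrD nE; field; rewrite !gt_eqF ?addr_gt0.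
Qed.

Lemma level_cond_nash : exists x : 'I_n -> bool,
  [/\ nash Vc d x, nplus x = k,
      #|[set i in Vc | x i]| = kc & #|[set i in Va Vc | x i]| = ka].
Proof.
set A := [set i in Va Vc | k%:R / (n%:R - 1) < thr d i].
set B := [set i in Va Vc | (k%:R - 1) / (n%:R - 1) <= thr d i].
have AB : A \subset B.
  apply/subsetP => i; rewrite !inE => /andP[-> /ltW]; apply: le_trans.
  by rewrite ler_level gerBl.
have [C [AC CB C_card]] :=
  card_set_between AB (introT andP (conj level_anti_card_le level_anti_card_ge)).
pose x i := if i \in Vc then thr d i <= (k%:R - 1) / (n%:R - 1) else i \in C.
have xVc : [set i in Vc | x i] = [set i in Vc | thr d i <= (k%:R - 1) / (n%:R - 1)].
  by apply/setP => i; rewrite !inE /x; case: (i \in Vc).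
have xVa : [set i in Va Vc | x i] = C.
  apply/setP => i; rewrite !inE /x; case: (boolP (i \in Vc)) => //= iVc.
  by apply/esym/negP => /(subsetP CB); rewrite !inE iVc.
have xVc_card : #|[set i in Vc | x i]| = kc.
  by rewrite xVc level_coord_card ?lexx // ltrBlDr ltrDl.
have x_plus : nplus x = k by rewrite card_plus_split xVc_card xVa C_card level_card_sum.
exists x; split; rewrite ?xVa //.
apply/nash_iff_best_response => i; rewrite x_plus /best_response /x.
case: (boolP (i \in Vc)) => iVc.
  by case: ifP => // /negbT; rewrite -ltNge; apply: coord_thr_gap.
case: ifP => iC; first by move: (subsetP CB i iC); rewrite inE => /andP[].
rewrite leNgt; apply: contraFN iC => thr_i.
by apply: (subsetP AC); rewrite !inE iVc.
Qed.

End Construction.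
End CACGame.

Theorem theorem1 (R : realFieldType) (n : nat) (Vc : {set 'I_n})
    (d : 'I_n -> R) :
  (2 <= n)%N -> Vc != set0 -> Va Vc != set0 ->
  (forall x : 'I_n -> bool, nash Vc d x ->
     cac_cond Vc d (zz R x) (zc R Vc x) (za R Vc x)) /\
  (forall z zc' za' : R,
     grid n z -> grid #|Vc| zc' -> grid #|Va Vc| za' ->
     cac_cond Vc d z zc' za' ->
     exists x : 'I_n -> bool,
       [/\ nash Vc d x, zz R x = z, zc R Vc x = zc' & za R Vc x = za']).
Proof.
move=> n_ge2 Vc_ne0 Va_ne0; split.
  by move=> x x_nash; apply/cac_cond_levelP/nash_level_cond.
move=> _ _ _ [k _ ->] [kc _ ->] [ka _ ->] /(cac_cond_levelP Vc d n_ge2) k_level.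
have [x [x_nash x_plus xVc xVa]] := level_cond_nash n_ge2 Vc_ne0 Va_ne0 k_level.
by exists x; rewrite /zz /zc /za x_plus xVc xVa.
Qed.
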